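(* Let $n$ be even. For all $v_0,\dots,v_n\in\mathbb{R}^n$, $$P(v_0,\dots,v_n)=(-1)^{n/2}\,2^n\,\mathrm{Sm}(v_0,\dots,v_n).$$
   Context: $\mathrm{Or}(v_1,\dots,v_n)=\operatorname{sign}\det(v_1,\dots,v_n)$ (zero if not a basis). $P(v_0,\dots,v_n)=\prod_{i=0}^n\mathrm{Or}(v_0,\dots,\widehat{v_i},\dots,v_n)$. $S(v_0,\dots,v_n)=0$ if $0$ is not in the interior of the convex hull of $v_0,\dots,v_n$, and otherwise $S(v_0,\dots,v_n)=(-1)^i\mathrm{Or}(v_0,\dots,\widehat{v_i},\dots,v_n)$ for any $i$ (independent of $i$). $\mathrm{Sm}(v_0,\dots,v_n)=2^{-(n+1)}\sum_{\sigma_i\in\{\pm1\}}S(\sigma_0v_0,\dots,\sigma_nv_n)$. *)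

(* R^n is modelled by row vectors 'rV[R]_n over an arbitrary
   real field R (the reals being one instance). *)
From HB Require Import structures.
From mathcomp Require Import all_boot all_order all_algebra.
From Stdlib Require Import ClassicalEpsilon.
Set Implicit Arguments. Unset Strict Implicit. Unset Printing Implicit Defensive.
Import Order.TTheory GRing.Theory Num.Theory.
Local Open Scope ring_scope.

Section Defs.
Variable R : realFieldType.
Variable n : nat.

Definition Or (w : 'I_n -> 'rV[R]_n) : R :=
  Num.sg (\det (\matrix_(j < n) w j)).

Definition hat (v : 'I_n.+1 -> 'rV[R]_n) (i : 'I_n.+1) : 'I_n -> 'rV[R]_n :=
  fun j => v (lift i j).

Definition Pf (v : 'I_n.+1 -> 'rV[R]_n) : R := \prod_(i < n.+1) Or (hat v i).

Definition in_conv_hull (v : 'I_n.+1 -> 'rV[R]_n) (x : 'rV[R]_n) : Prop :=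
  exists l : 'I_n.+1 -> R,
    (forall i, 0 <= l i) /\ \sum_(i < n.+1) l i = 1 /\
    x = \sum_(i < n.+1) l i *: v i.

Definition in_interior (A : 'rV[R]_n -> Prop) (x : 'rV[R]_n) : Prop :=
  exists2 eps : R, 0 < eps &
    forall y : 'rV[R]_n, (forall j, `|y 0 j - x 0 j| < eps) -> A y.

(* S(v_0,...,v_n), using i = 0 in (-1)^i Or(v_0,..,^v_i,..,v_n) *)
Definition Sf (v : 'I_n.+1 -> 'rV[R]_n) : R :=
  if excluded_middle_informative (in_interior (in_conv_hull v) 0) then Or (hat v ord0) else 0.

(* Sm = 2^{-(n+1)} sum over sign choices sigma of S(sigma_0 v_0,...,sigma_n v_n);
   sigma i = true encodes the sign -1. *)
Definition Sm (v : 'I_n.+1 -> 'rV[R]_n) : R :=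
  (2 ^+ n.+1)^-1 *
  \sum_(s : {ffun 'I_n.+1 -> bool}) Sf (fun i => (-1) ^+ s i *: v i).

End Defs.

(* Cramer's rule gives the linear relation
   sum_i (-1)^i det(v_0, .., ^v_i, .., v_n) v_i = 0.  When all these minors
   are nonzero, it is the only relation up to scaling, so 0 lies in the
   interior of the hull of s_0 v_0, .., s_n v_n exactly when the coefficients
   s_i (-1)^i det(.., ^v_i, ..) all have the same sign.  This happens for
   exactly two opposite sign vectors s, and for n even both contribute
   prod_i sg((-1)^i det(.., ^v_i, ..)) = (-1)^(n(n+1)/2) P(v).  When some minor
   vanishes, P(v) = 0 and every hull is flat, so Sm(v) = 0 as well. *)

From HB Require Import structures.
From mathcomp Require Import all_boot all_order all_algebra.
From mathcomp Require Import ring lra.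
From Stdlib Require Import ClassicalEpsilon.
Import Order.TTheory GRing.Theory Num.Theory.
Set Implicit Arguments. Unset Strict Implicit. Unset Printing Implicit Defensive.
Local Open Scope ring_scope.

Section Simplex.
Variable R : realFieldType.
Variable n : nat.
Implicit Types (v w : 'I_n.+1 -> 'rV[R]_n) (x y : 'rV[R]_n) (s : {ffun 'I_n.+1 -> bool}).

Definition hat_mx v (i : 'I_n.+1) : 'M[R]_n := \matrix_(j < n) hat v i j.

Definition cramer_coef v (i : 'I_n.+1) : R := (-1) ^+ i * \det (hat_mx v i).

(* Expand along its last column the determinant of the matrix with rows
   [v i | v i 0 k], whose last column repeats column k. *)
Lemma cramer_rel v : \sum_i cramer_coef v i *: v i = 0.
Proof.
apply/rowP => k; rewrite summxE mxE.
pose M := \matrix_(i < n.+1, j < n.+1)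
   (if unlift ord_max j is Some j' then v i 0 j' else v i 0 k).
have detM0 : \det M = 0.
  rewrite -det_tr; apply: (@determinant_alternate _ _ _ (lift ord_max k) ord_max).
    by rewrite eq_sym neq_lift.
  by move=> j; rewrite !mxE liftK unlift_none.
apply: (mulfI (negbT (signr_eq0 R n))); rewrite mulr0 -[RHS]detM0 mulr_sumr.
rewrite (expand_det_col _ ord_max); apply: eq_bigr => i _.
rewrite /cofactor.
have -> : row' i (col' ord_max M) = hat_mx v i.
  by apply/matrixP => a b; rewrite !mxE liftK.
by rewrite !mxE unlift_none /cramer_coef /= exprD; ring.
Qed.

Lemma mulmx_hat_mx w k (a : 'rV[R]_n) :
  a *m hat_mx w k = \sum_j a 0 j *: w (lift k j).
Proof.
by apply/rowP => l; rewrite !mxE summxE; apply: eq_bigr => j _; rewrite !mxE.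
Qed.

Lemma sum_scale_hat0 w (e : 'I_n.+1 -> R) :
  \sum_i e i *: w i =
  e ord0 *: w ord0 + (\row_j e (lift ord0 j)) *m hat_mx w ord0.
Proof.
by rewrite big_ord_recl mulmx_hat_mx; congr (_ + _); apply: eq_bigr => j _; rewrite mxE.
Qed.

Definition dotr x y : R := \sum_l x 0 l * y 0 l.

Lemma dotrN x y : dotr x (- y) = - dotr x y.
Proof. by rewrite /dotr -sumrN; apply: eq_bigr => l _; rewrite mxE mulrN. Qed.

Lemma dotr_sum x (a : 'I_n.+1 -> R) w :
  dotr x (\sum_i a i *: w i) = \sum_i a i * dotr x (w i).
Proof.
rewrite /dotr; under eq_bigr => l _ do rewrite summxE mulr_sumr.
rewrite exchange_big; apply: eq_bigr => i _; rewrite mulr_sumr.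
by apply: eq_bigr => l _; rewrite mxE mulrCA.
Qed.

Lemma det0_orthogonal w k : \det (hat_mx w k) = 0 ->
  exists2 x, x != 0 & forall j, dotr x (w (lift k j)) = 0.
Proof.
move=> det0; have /det0P[x x_neq0 hx] : \det (hat_mx w k)^T == 0.
  by rewrite det_tr det0.
exists x => // j; have := congr1 (fun M : 'rV[R]_n => M 0 j) hx.
by rewrite !mxE => <-; apply: eq_bigr => l _; rewrite !mxE.
Qed.

Lemma interior0_dotr (A : 'rV[R]_n -> Prop) x : in_interior A 0 -> x != 0 ->
  exists y, [/\ A y, A (- y) & dotr x y != 0].
Proof.
case=> e e_gt0 hA x_neq0; have /existsP[l xl_neq0] : [exists l, x 0 l != 0].
  apply: contraR x_neq0 => /existsPn x0; apply/eqP/rowP => l.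
  by rewrite mxE; apply/eqP; rewrite -[_ == _]negbK x0.
have e2_gt0 : 0 < e / 2 by rewrite divr_gt0.
pose y : 'rV[R]_n := \row_j (if j == l then e / 2 else 0).
have small_y j : `|y 0 j| < e.
  rewrite mxE; case: eqP => _; last by rewrite normr0.
  by rewrite gtr0_norm // ltr_pdivrMr // ltr_pMr // ltr1n.
exists y; split.
- by apply: hA => j; rewrite [X in _ - X]mxE subr0 small_y.
- by apply: hA => j; rewrite [X in _ - X]mxE subr0 mxE normrN small_y.
rewrite /dotr (bigD1 l) //= big1 => [|j /negbTE jl]; last by rewrite mxE jl mulr0.
by rewrite addr0 mxE eqxx mulf_neq0 // gt_eqF.
Qed.

(* A degenerate facet puts the whole hull in a closed half-space through 0. *)
Lemma not_interior_conv_hull w k : \det (hat_mx w k) = 0 ->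
  ~ in_interior (in_conv_hull w) 0.
Proof.
case/det0_orthogonal=> x x_neq0 x_perp /interior0_dotr/(_ x_neq0)[y [hy hNy dy_neq0]].
have on_ray z : in_conv_hull w z -> exists2 a, 0 <= a & dotr x z = a * dotr x (w k).
  case=> l [l_ge0 [_ ->]]; exists (l k) => //; rewrite dotr_sum (bigD1 k) //=.
  rewrite big1 ?addr0 // => i; case: (unliftP k i) => [j ->|->]; last by rewrite eqxx.
  by rewrite x_perp mulr0.
have [[a a_ge0 ha] [b b_ge0 hb]] := (on_ray _ hy, on_ray _ hNy).
have : 0 <= dotr x y * dotr x (- y).
  rewrite ha hb mulrACA -expr2; apply: mulr_ge0; [exact: mulr_ge0 | exact: sqr_ge0].
by rewrite dotrN mulrN oppr_ge0 -expr2 leNgt exprn_even_gt0 // dy_neq0.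
Qed.

Lemma hat0_rel_eq0 w (e : 'I_n.+1 -> R) : \det (hat_mx w ord0) != 0 ->
  \sum_i e i *: w i = 0 -> e ord0 = 0 -> forall i, e i = 0.
Proof.
move=> det_neq0; rewrite sum_scale_hat0 => + e0; rewrite e0 scale0r add0r => hrow i.
have unit_A : hat_mx w ord0 \in unitmx by rewrite unitmxE unitfE.
have row0 : \row_j e (lift ord0 j) = 0 :> 'rV[R]_n.
  by rewrite -(mulmxK unit_A (\row_j _)) hrow mul0mx.
case: (unliftP ord0 i) => [j ->|-> //].
by have := congr1 (fun r : 'rV[R]_n => r 0 j) row0; rewrite !mxE.
Qed.

Lemma conv_hull0_rel_sign w (d : 'I_n.+1 -> R) : \det (hat_mx w ord0) != 0 ->
  (forall i, d i != 0) -> \sum_i d i *: w i = 0 ->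
  in_conv_hull w 0 -> exists t, forall i, 0 < t * d i.
Proof.
move=> det_neq0 d_neq0 rel_d [l [l_ge0 [l_sum1 rel_l]]].
pose t := l ord0 / d ord0; exists t.
have l_eq i : l i = t * d i.
  apply/eqP; rewrite -subr_eq0; apply/eqP; move: i; apply: (hat0_rel_eq0 det_neq0).
    rewrite (eq_bigr (fun i => l i *: w i - t *: (d i *: w i))) => [|i _]; last first.
      by rewrite scalerBl scalerA.
    by rewrite sumrB -scaler_sumr rel_d scaler0 -rel_l subr0.
  by rewrite /t divfK ?subrr.
have t_neq0 : t != 0.
  apply: contra_eq_neq l_sum1 => t0; rewrite big1 => [|i _]; last first.
    by rewrite l_eq t0 mul0r.
  by rewrite eq_sym oner_eq0.
by move=> i; rewrite -l_eq lt_def l_ge0 andbT l_eq mulf_neq0.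
Qed.

Lemma pos_lbound (I : finType) (d : I -> R) : (forall i, 0 < d i) ->
  exists2 m, 0 < m & forall i, m <= d i.
Proof.
move=> d_gt0; exists (\big[Num.min/1]_i d i).
  by elim/big_ind: _ => // a b a_gt0 b_gt0; rewrite lt_min a_gt0.
by move=> i; rewrite (bigD1 i) //= ge_min lexx.
Qed.

Lemma mulmx_row_small p q (B : 'M[R]_(p, q)) c : 0 < c ->
  exists2 eps, 0 < eps &
    forall y : 'rV[R]_p, (forall k, `|y 0 k| < eps) -> forall j, `|(y *m B) 0 j| <= c.
Proof.
move=> c_gt0; pose col_norm j := \sum_k `|B k j|.
have col_norm_ge0 j : 0 <= col_norm j by apply: sumr_ge0.
pose K := \sum_j col_norm j + 1.
have K_gt0 : 0 < K.
  have : 0 <= \sum_j col_norm j by exact: sumr_ge0.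
  rewrite /K; lra.
have colK j : col_norm j <= K.
  have : 0 <= \sum_(i | i != j) col_norm i by exact: sumr_ge0.
  move=> rest_ge0; rewrite /K (bigD1 j) //=; lra.
exists (c / K) => [|y small_y j]; first by rewrite divr_gt0.
rewrite mxE (le_trans (ler_norm_sum _ _ _)) //.
apply: (@le_trans _ _ (\sum_k c / K * `|B k j|)).
  by apply: ler_sum => k _; rewrite normrM ler_wpM2r // ltW.
by rewrite -mulr_sumr mulrAC ler_pdivrMr // ler_wpM2l ?(ltW c_gt0) ?(colK j).
Qed.

(* Barycentric coordinates of y, perturbed from d linearly in y, stay nonnegative near 0. *)
Lemma interior_conv_hull_of_weights w (d : 'I_n.+1 -> R) :
  \det (hat_mx w ord0) != 0 -> (forall i, 0 < d i) -> \sum_i d i = 1 ->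
  \sum_i d i *: w i = 0 -> in_interior (in_conv_hull w) 0.
Proof.
move=> det_neq0 d_gt0 d_sum1 rel_d.
have unit_A : hat_mx w ord0 \in unitmx by rewrite unitmxE unitfE.
have [m m_gt0 m_le] := pos_lbound d_gt0.
have m_le1 : m <= 1.
  have : 0 <= \sum_(i | i != ord0) d i by apply: sumr_ge0 => i _; exact: ltW.
  by move: (m_le ord0) d_sum1; rewrite (bigD1 ord0) //=; lra.
pose c := m / (2 * n.+1%:R).
have n1_gt0 : 0 < n.+1%:R :> R by rewrite ltr0n.
have c_gt0 : 0 < c by rewrite divr_gt0 // mulr_gt0.
have nc_le : c * n.+1%:R = m / 2 by rewrite /c invfM mulrA divfK ?gt_eqF.
have [eps eps_gt0 small] := mulmx_row_small (invmx (hat_mx w ord0)) c_gt0.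
exists eps => // y near_y.
pose mu := y *m invmx (hat_mx w ord0).
have mu_le j : `|mu 0 j| <= c.
  by apply: small => k; have := near_y k; rewrite [X in _ - X]mxE subr0.
have sum_mu_le : `|\sum_j mu 0 j| <= c * n%:R.
  apply: le_trans (ler_norm_sum _ _ _) _.
  by rewrite (le_trans (ler_sum _ (fun j _ => mu_le j))) // sumr_const card_ord mulr_natr.
pose alpha := 1 - \sum_j mu 0 j.
have alpha_ge : 2^-1 <= alpha.
  have : c * n%:R <= c * n.+1%:R by rewrite ler_wpM2l ?ler_nat // ltW.
  have := ler_norm (\sum_j mu 0 j); rewrite nc_le /alpha; lra.
pose e i := if unlift ord0 i is Some j then mu 0 j else 0.
exists (fun i => alpha * d i + e i); split; [|split].
- move=> i; have : m / 2 <= alpha * d i.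
    by rewrite mulrC; apply: ler_pM; rewrite ?invr_ge0 ?ler0n ?(ltW m_gt0).
  rewrite /e; case: unliftP => [j _|_]; last by lra.
  have : c <= m / 2 by rewrite -nc_le ler_peMr ?ler1n // ltW.
  by move: (mu_le j); rewrite ler_norml; lra.
- rewrite big_split /= -mulr_sumr d_sum1 mulr1 big_ord_recl /e unlift_none add0r.
  by under eq_bigr => j _ do rewrite liftK; rewrite subrK.
under eq_bigr => i _ do rewrite scalerDl -scalerA.
rewrite big_split /= -scaler_sumr rel_d scaler0 add0r sum_scale_hat0 /e.
rewrite unlift_none scale0r add0r.
have -> : \row_j (if unlift ord0 (lift ord0 j) is Some j' then mu 0 j' else 0) = mu.
  by apply/rowP => j; rewrite mxE liftK.
by rewrite mulmxKV.
Qed.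

Lemma interior_conv_hull0P w (d : 'I_n.+1 -> R) :
  \det (hat_mx w ord0) != 0 -> (forall i, d i != 0) -> \sum_i d i *: w i = 0 ->
  in_interior (in_conv_hull w) 0 <-> exists t, forall i, 0 < t * d i.
Proof.
move=> det_neq0 d_neq0 rel_d; split.
  case=> e e_gt0 in_hull; apply: (conv_hull0_rel_sign det_neq0 d_neq0 rel_d).
  by apply: (in_hull 0) => j; rewrite subrr normr0.
case=> t td_gt0; pose D := \sum_i t * d i.
have D_gt0 : 0 < D.
  have rest_ge0 : 0 <= \sum_(i | i != ord0) t * d i by apply: sumr_ge0 => i _; exact: ltW.
  by move: (td_gt0 ord0); rewrite /D (bigD1 ord0) //=; lra.
apply: (@interior_conv_hull_of_weights _ (fun i => t * d i / D)) => //.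
- by move=> i; rewrite divr_gt0.
- by rewrite -mulr_suml divff // gt_eqF.
under eq_bigr => i _ do rewrite mulrAC -scalerA -scalerA.
by rewrite -!scaler_sumr rel_d !scaler0.
Qed.

Definition sign_flip s v i := (-1) ^+ s i *: v i.

Lemma det_sign_flip s v k : \det (hat_mx (sign_flip s v) k) =
  (-1) ^+ (\sum_j s (lift k j)) * \det (hat_mx v k).
Proof.
have -> : hat_mx (sign_flip s v) k =
    diag_mx (\row_j (-1) ^+ s (lift k j)) *m hat_mx v k.
  by rewrite mul_diag_mx; apply/matrixP => a b; rewrite !mxE.
rewrite det_mulmx det_diag -prodrXr; congr (_ * _).
by apply: eq_bigr => j _; rewrite mxE.
Qed.

Lemma Or_sign_flip s v k : Or (hat (sign_flip s v) k) =
  (-1) ^+ (\sum_j s (lift k j)) * Or (hat v k).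
Proof. by rewrite /Or -!/(hat_mx _ _) det_sign_flip sgrM sgrX sgrN1. Qed.

Lemma cramer_rel_sign_flip s v :
  \sum_i ((-1) ^+ s i * cramer_coef v i) *: sign_flip s v i = 0.
Proof.
rewrite -[RHS](cramer_rel v); apply: eq_bigr => i _.
by rewrite /sign_flip scalerA mulrAC -signr_addb addbb mul1r.
Qed.

Lemma signr_mul_gt0 (b : bool) (x : R) : 0 < (-1) ^+ b * x -> b = (x < 0).
Proof.
by case: b; rewrite ?expr1 ?expr0 ?mulN1r ?mul1r ?oppr_gt0 // => /ltW; rewrite leNgt => /negbTE.
Qed.

Lemma signr_mul_lt0 (b : bool) (x : R) : (-1) ^+ b * x < 0 -> b = (0 < x).
Proof.
by case: b; rewrite ?expr1 ?expr0 ?mulN1r ?mul1r ?oppr_lt0 // => /ltW; rewrite leNgt => /negbTE.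
Qed.

Definition neg_coefs v : {ffun 'I_n.+1 -> bool} := [ffun i => cramer_coef v i < 0].
Definition pos_coefs v : {ffun 'I_n.+1 -> bool} := [ffun i => 0 < cramer_coef v i].

Section Nondegenerate.
Variable v : 'I_n.+1 -> 'rV[R]_n.
Hypothesis det_hat_neq0 : forall i, \det (hat_mx v i) != 0.

Lemma cramer_coef_neq0 i : cramer_coef v i != 0.
Proof. by rewrite mulf_neq0 ?signr_eq0. Qed.

Lemma interior_sign_flipP s :
  in_interior (in_conv_hull (sign_flip s v)) 0 <-> s = neg_coefs v \/ s = pos_coefs v.
Proof.
rewrite (interior_conv_hull0P _ _ (cramer_rel_sign_flip s v)); first split; last 2 first.
- by rewrite det_sign_flip mulf_neq0 ?signr_eq0.
- by move=> i; rewrite mulf_neq0 ?signr_eq0 ?cramer_coef_neq0.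
- case=> t t_gt0; have t_neq0 : t != 0.
    by apply: contraTneq (t_gt0 ord0) => ->; rewrite mul0r ltxx.
  case: (ltgtP t 0) t_neq0 => // t_sign _; [right | left]; apply/ffunP => i; rewrite ffunE.
    by apply: signr_mul_lt0; have := t_gt0 i; rewrite nmulr_rgt0.
  by apply: signr_mul_gt0; have := t_gt0 i; rewrite pmulr_rgt0.
case=> ->; [exists 1 | exists (-1)] => i; rewrite ffunE.
  by rewrite mul1r -normrEsign normr_gt0 cramer_coef_neq0.
case: (ltgtP (cramer_coef v i) 0) (cramer_coef_neq0 i) => // c_sign _.
  by rewrite expr0 mulN1r mul1r oppr_gt0.
by rewrite expr1 !mulN1r opprK.
Qed.

Lemma Sf_sign_flip s : Sf (sign_flip s v) =
  if (s == neg_coefs v) || (s == pos_coefs v) then Or (hat (sign_flip s v) ord0) else 0.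
Proof.
rewrite /Sf; case: excluded_middle_informative => [in_int|not_int] /=.
  by case: (interior_sign_flipP s).1 => // ->; rewrite eqxx ?orbT.
case: ifP => // /orP flip_ok; case: not_int; apply/interior_sign_flipP.
by case: flip_ok => /eqP; [left | right].
Qed.

Lemma neg_coefs_neq_pos : neg_coefs v != pos_coefs v.
Proof.
apply/eqP => /ffunP /(_ ord0); rewrite !ffunE.
by case: ltgtP (cramer_coef_neq0 ord0).
Qed.

Lemma sum_Sf_sign_flip : \sum_s Sf (sign_flip s v) =
  Or (hat (sign_flip (neg_coefs v) v) ord0) + Or (hat (sign_flip (pos_coefs v) v) ord0).
Proof.
rewrite (bigD1 (neg_coefs v)) //= (bigD1 (pos_coefs v)) 1?eq_sym ?neg_coefs_neq_pos //=.
rewrite big1 => [|s /andP[s_neq_pos s_neq_neg]]; first by rewrite !Sf_sign_flip !eqxx orbT addr0.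
by rewrite Sf_sign_flip (negbTE s_neq_pos) (negbTE s_neq_neg).
Qed.

Lemma Or_sign_flip_neg_coefs :
  Or (hat (sign_flip (neg_coefs v) v) ord0) = \prod_i Num.sg (cramer_coef v i).
Proof.
rewrite Or_sign_flip -prodrXr big_ord_recl mulrC /cramer_coef expr0 mul1r.
by congr (_ * _); apply: eq_bigr => j _; rewrite ffunE sgr_def cramer_coef_neq0.
Qed.

Lemma Or_sign_flip_pos_coefs : ~~ odd n ->
  Or (hat (sign_flip (pos_coefs v) v) ord0) = \prod_i Num.sg (cramer_coef v i).
Proof.
move=> n_even; rewrite -Or_sign_flip_neg_coefs !Or_sign_flip; congr (_ * _).
rewrite -!prodrXr (eq_bigr (fun j => - (-1) ^+ neg_coefs v (lift ord0 j))) => [|j _].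
  by rewrite prodrN card_ord -signr_odd (negbTE n_even) mul1r.
rewrite !ffunE.
by case: (ltgtP (cramer_coef v (lift ord0 j)) 0) (cramer_coef_neq0 (lift ord0 j)); rewrite ?opprK.
Qed.
End Nondegenerate.

Lemma prod_sg_cramer_coef v :
  \prod_i Num.sg (cramer_coef v i) = (-1) ^+ (\sum_(i < n.+1) i) * Pf v.
Proof.
rewrite /Pf -prodrXr -big_split /=; apply: eq_bigr => i _.
by rewrite sgrM sgrX sgrN1.
Qed.

Lemma SmE v : Sm v = (2 ^+ n.+1)^-1 * \sum_s Sf (sign_flip s v).
Proof. by []. Qed.

Lemma Sm_degenerate v k : \det (hat_mx v k) = 0 -> Sm v = 0.
Proof.
move=> det0; rewrite SmE big1 ?mulr0 // => s _; rewrite /Sf.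
case: excluded_middle_informative => // in_int; exfalso.
by apply: (@not_interior_conv_hull _ k _ in_int); rewrite det_sign_flip det0 mulr0.
Qed.

Lemma Sm_cramer v : ~~ odd n ->
  Sm v = (2 ^+ n)^-1 * \prod_i Num.sg (cramer_coef v i).
Proof.
move=> n_even.
have [/forallP det_neq0|/forallPn[k]] := boolP [forall i, \det (hat_mx v i) != 0].
  rewrite SmE sum_Sf_sign_flip // Or_sign_flip_neg_coefs // Or_sign_flip_pos_coefs //.
  rewrite exprS -mulr2n -mulr_natr; field.
  by rewrite mul1r expf_neq0 ?pnatr_eq0.
rewrite negbK => /eqP det0; rewrite (Sm_degenerate det0) (bigD1 k) //= /cramer_coef det0.
by rewrite mulr0 sgr0 mul0r mulr0.
Qed.
End Simplex.

Lemma sign_sum_ord (R : nzRingType) (n : nat) : ~~ odd n ->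
  (-1) ^+ (\sum_(i < n.+1) i) = (-1) ^+ n./2 :> R.
Proof.
move=> n_even; rewrite -(big_mkord xpredT (fun i => i)) bin2_sum bin2odd //.
by rewrite -signr_odd oddM /= n_even /= signr_odd.
Qed.

Theorem corollary8p3 (R : realFieldType) (n : nat) (hn : ~~ odd n)
    (v : 'I_n.+1 -> 'rV[R]_n) :
  Pf v = (-1) ^+ n./2 * 2 ^+ n * Sm v.
Proof.
rewrite Sm_cramer // prod_sg_cramer_coef sign_sum_ord // mulrA mulfK ?expf_neq0 ?pnatr_eq0 //.
by rewrite mulrA -expr2 sqrr_sign mul1r.
Qed.
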